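(* For $\tau\in\mathbb{R}$ and integer $n\ge0$ let $$\mu_{2n}(\tau;0)=\int_{-\infty}^{\infty}x^{2n}\exp(-x^6+\tau x^4)\,dx.$$ Then \begin{align*} \mu_{2n}(\tau;0)&=\tfrac13\Gamma\!\left(\tfrac13n+\tfrac16\right){}_2F_2\!\left(\tfrac16n+\tfrac1{12},\tfrac16n+\tfrac7{12};\tfrac13,\tfrac23;\tfrac{4\tau^3}{27}\right)+\tfrac13\tau\Gamma\!\left(\tfrac13n+\tfrac56\right){}_2F_2\!\left(\tfrac16n+\tfrac5{12},\tfrac16n+\tfrac{11}{12};\tfrac23,\tfrac43;\tfrac{4\tau^3}{27}\right)\\ &\quad+\tfrac16\tau^2\Gamma\!\left(\tfrac13n+\tfrac32\right){}_2F_2\!\left(\tfrac16n+\tfrac34,\tfrac16n+\tfrac54;\tfrac43,\tfrac53;\tfrac{4\tau^3}{27}\right). \end{align*}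
   Context: ${}_2F_2(a_1,a_2;b_1,b_2;z)$ denotes the generalised hypergeometric function with upper parameters $a_1,a_2$ and lower parameters $b_1,b_2$. *)

From Stdlib Require Import Reals Factorial.
From Coquelicot Require Import Coquelicot.
Open Scope R_scope.

Fixpoint poch (a : R) (k : nat) : R :=
  match k with
  | O => 1
  | S k' => poch a k' * (a + INR k')
  end.

Definition hyp2F2 (a1 a2 b1 b2 z : R) : R :=
  Series (fun k => poch a1 k * poch a2 k / (poch b1 k * poch b2 k * INR (Factorial.fact k)) * z ^ k).

Definition Gamma (s : R) : R :=
  RInt_gen (fun t => Rpower t (s - 1) * exp (- t))
           (at_right 0) (Rbar_locally p_infty).

Definition mu_integrand (tau : R) (n : nat) (x : R) : R :=
  x ^ (2 * n) * exp (- x ^ 6 + tau * x ^ 4).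

(* Write M_c(m) = int_0^oo x^m e^(-c x^6) dx.  Since the integrand is even,
   mu_2n(tau;0) = 2 int_0^oo, and expanding e^(tau x^4) gives
   int_0^oo = sum_k tau^k/k! M_1(2n+4k).  The substitution t = x^6 gives
   Gamma((m+1)/6) = 6 M_1(m), and integration by parts gives
   M_c(m+6) = (m+1)/(6c) M_c(m).  So within each residue class k = 3j+r the
   ratio of consecutive terms is a rational function of j, and this identifies
   the subseries as tau^r/r! M_1(2n+4r) 2F2(..; 4tau^3/27).
   To swap sum and integral, use |tau| x^4 <= x^6/2 + 4|tau|^3.  It bounds
   the Taylor remainder of e^(tau x^4) after K terms by
   e^(4|tau|^3) |tau|^(K+1)/(K+1)! x^(4K+4) e^(x^6/2).  Hence the error of
   the truncated integral is at most a multiple of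
   |tau|^(K+1)/(K+1)! M_(1/2)(2n+4K+4), which tends to 0 by the same
   recursion for M_(1/2). *)

From Stdlib Require Import Reals Lra Lia Psatz Factorial.
From Coquelicot Require Import Coquelicot.
Open Scope R_scope.

(** * Exponential series *)

Lemma INR_fact_pos k : 0 < INR (fact k).
Proof. apply lt_0_INR, lt_O_fact. Qed.

Lemma is_series_exp y : is_series (fun k => y ^ k / INR (fact k)) (exp y).
Proof.
  eapply is_series_ext; [|exact (is_exp_Reals y)].
  intros k. unfold scal; simpl. unfold mult; simpl. rewrite pow_n_pow. reflexivity.
Qed.

Lemma pow_div_fact_le_exp y k : 0 <= y -> y ^ k / INR (fact k) <= exp y.
Proof.
  intros Hy.
  set (a := fun k => y ^ k / INR (fact k)).
  assert (Ha : forall k, 0 <= a k).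
  { intros j. apply Rdiv_le_0_compat; [apply pow_le; lra | apply INR_fact_pos]. }
  apply Rle_trans with (sum_n a k).
  - destruct k as [|k].
    { rewrite sum_O. apply Rle_refl. }
    rewrite sum_Sn. change (a (S k) <= sum_n a k + a (S k)).
    assert (0 <= sum_n a k).
    { rewrite sum_n_Reals. apply cond_pos_sum. exact Ha. }
    lra.
  - apply (is_lim_seq_incr_compare (sum_n a)); [apply is_series_exp|].
    intros j. rewrite sum_Sn. generalize (Ha (S j)). unfold plus; simpl. lra.
Qed.

Lemma fact_mul_le_fact_add K i : INR (fact K) * INR (fact i) <= INR (fact (K + i)).
Proof.
  induction i as [|i IH].
  - rewrite Nat.add_0_r. simpl. lra.
  - rewrite Nat.add_succ_r, !fact_simpl, !mult_INR, !S_INR, plus_INR.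
    generalize (INR_fact_pos (K + i)) (pos_INR K) (pos_INR i). intros. nra.
Qed.

Lemma exp_taylor_remainder y K :
  Rabs (exp y - sum_n (fun k => y ^ k / INR (fact k)) K)
  <= Rabs y ^ S K / INR (fact (S K)) * exp (Rabs y).
Proof.
  set (a := fun k => y ^ k / INR (fact k)).
  set (c := Rabs y ^ S K / INR (fact (S K))).
  set (b := fun i => c * (Rabs y ^ i / INR (fact i))).
  assert (Htail : is_series (fun i => a (S K + i)%nat) (exp y - sum_n a K)).
  { apply is_series_incr_n; [lia|]. simpl pred.
    match goal with |- is_series _ ?l => replace l with (exp y) end;
      [apply is_series_exp |].
    unfold plus; simpl. unfold Rminus. rewrite Rplus_assoc, Rplus_opp_l. ring. }
  assert (Hb : is_series b (c * exp (Rabs y))).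
  { exact (is_series_scal_l c _ _ (is_series_exp (Rabs y))). }
  assert (Hdom : forall i, Rabs (a (S K + i)%nat) <= b i).
  { intros i. unfold a, b, c.
    rewrite Rabs_div by apply INR_fact_neq_0.
    rewrite (Rabs_right (INR _)) by (apply Rle_ge, pos_INR).
    rewrite pow_add, Rabs_mult, <- !RPow_abs.
    generalize (fact_mul_le_fact_add (S K) i) (INR_fact_pos (S K)) (INR_fact_pos i).
    generalize (pow_le _ (S K) (Rabs_pos y)) (pow_le _ i (Rabs_pos y)).
    intros H1 H2 Hf H3 H4.
    replace (Rabs y ^ S K / INR (fact (S K)) * (Rabs y ^ i / INR (fact i)))
      with (Rabs y ^ S K * Rabs y ^ i / (INR (fact (S K)) * INR (fact i))) by (field; lra).
    apply Rmult_le_compat_l; [nra|]. apply Rinv_le_contravar; nra. }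
  assert (Habs : ex_series (fun i => Rabs (a (S K + i)%nat))).
  { apply (ex_series_le (V := R_CompleteNormedModule) _ b); [|eexists; exact Hb].
    intros i. unfold norm; simpl. unfold abs; simpl. rewrite Rabs_Rabsolu. apply Hdom. }
  rewrite <- (is_series_unique _ _ Htail), <- (is_series_unique _ _ Hb).
  eapply Rle_trans; [apply Series_Rabs, Habs|].
  apply Series_le; [|eexists; exact Hb].
  intros i. split; [apply Rabs_pos | apply Hdom].
Qed.

(** * Ratio bounds and the series of 2F2 *)

Lemma ex_series_of_ratio_le (w : nat -> R) (D : R) :
  0 <= D -> (forall j, Rabs (w (S j)) <= D / INR (S j) * Rabs (w j)) -> ex_series w.
Proof.
  intros HD Hratio.
  assert (Hbound : forall j, Rabs (w j) <= Rabs (w O) * (D ^ j / INR (fact j))).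
  { induction j as [|j IH].
    - simpl. lra.
    - eapply Rle_trans; [apply Hratio|].
      rewrite fact_simpl, mult_INR. simpl pow.
      generalize (INR_fact_pos j) (lt_0_INR (S j) (Nat.lt_0_succ j)). intros Hf Hs.
      replace (Rabs (w O) * (D * D ^ j / (INR (S j) * INR (fact j))))
        with (D / INR (S j) * (Rabs (w O) * (D ^ j / INR (fact j)))) by (field; lra).
      apply Rmult_le_compat_l; [apply Rdiv_le_0_compat; lra | exact IH]. }
  apply (ex_series_le (V := R_CompleteNormedModule) _ _ Hbound).
  eexists. exact (is_series_scal_l _ _ _ (is_series_exp D)).
Qed.

Definition hyp2F2_term (a1 a2 b1 b2 z : R) (k : nat) : R :=
  poch a1 k * poch a2 k / (poch b1 k * poch b2 k * INR (fact k)) * z ^ k.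

Lemma poch_pos a k : 0 < a -> 0 < poch a k.
Proof.
  intros Ha. induction k as [|k IH]; simpl; [lra|].
  apply Rmult_lt_0_compat; [exact IH | generalize (pos_INR k); lra].
Qed.

Lemma hyp2F2_term_succ a1 a2 b1 b2 z k : 0 < b1 -> 0 < b2 ->
  hyp2F2_term a1 a2 b1 b2 z (S k) = hyp2F2_term a1 a2 b1 b2 z k *
    ((a1 + INR k) * (a2 + INR k) * z / ((b1 + INR k) * (b2 + INR k) * INR (S k))).
Proof.
  intros Hb1 Hb2. unfold hyp2F2_term. simpl poch. rewrite fact_simpl, mult_INR. simpl pow.
  generalize (poch_pos b1 k Hb1) (poch_pos b2 k Hb2) (pos_INR k) (INR_fact_pos k)
    (lt_0_INR (S k) (Nat.lt_0_succ k)).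
  intros. field. repeat split; lra.
Qed.

Lemma Rabs_shift_div_le a b x : 0 < b -> 0 <= x -> Rabs ((a + x) / (b + x)) <= 1 + Rabs a / b.
Proof.
  intros Hb Hx. rewrite Rabs_div, (Rabs_right (b + x)) by lra.
  apply (Rmult_le_reg_r (b + x)); [lra|].
  replace (Rabs (a + x) / (b + x) * (b + x)) with (Rabs (a + x)) by (field; lra).
  replace ((1 + Rabs a / b) * (b + x)) with (b + x + Rabs a + Rabs a * x / b) by (field; lra).
  generalize (Rabs_triang a x) (Rabs_pos a). rewrite (Rabs_right x) by lra. intros.
  assert (0 <= Rabs a * x / b) by (apply Rdiv_le_0_compat; nra). lra.
Qed.

Lemma is_series_hyp2F2 a1 a2 b1 b2 z : 0 < b1 -> 0 < b2 ->
  is_series (hyp2F2_term a1 a2 b1 b2 z) (hyp2F2 a1 a2 b1 b2 z).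
Proof.
  intros Hb1 Hb2. apply Series_correct.
  apply (ex_series_of_ratio_le _ ((1 + Rabs a1 / b1) * (1 + Rabs a2 / b2) * Rabs z)).
  - generalize (Rabs_pos a1) (Rabs_pos a2) (Rabs_pos z). intros.
    assert (0 <= Rabs a1 / b1) by (apply Rdiv_le_0_compat; lra).
    assert (0 <= Rabs a2 / b2) by (apply Rdiv_le_0_compat; lra).
    apply Rmult_le_pos; [apply Rmult_le_pos|]; lra.
  - intros j. rewrite hyp2F2_term_succ by assumption.
    generalize (pos_INR j) (lt_0_INR (S j) (Nat.lt_0_succ j)). intros Hj HSj.
    replace ((a1 + INR j) * (a2 + INR j) * z / ((b1 + INR j) * (b2 + INR j) * INR (S j)))
      with ((a1 + INR j) / (b1 + INR j) * ((a2 + INR j) / (b2 + INR j)) * z / INR (S j))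
      by (field; repeat split; lra).
    rewrite Rabs_mult, Rabs_div, !Rabs_mult, (Rabs_right (INR (S j))) by lra.
    set (q1 := Rabs ((a1 + INR j) / (b1 + INR j))).
    set (q2 := Rabs ((a2 + INR j) / (b2 + INR j))).
    set (t := Rabs (hyp2F2_term a1 a2 b1 b2 z j)).
    assert (Hq1 : q1 <= 1 + Rabs a1 / b1) by (apply Rabs_shift_div_le; assumption).
    assert (Hq2 : q2 <= 1 + Rabs a2 / b2) by (apply Rabs_shift_div_le; assumption).
    assert (Ht : 0 <= t / INR (S j)) by (apply Rdiv_le_0_compat; [apply Rabs_pos | lra]).
    replace (t * (q1 * q2 * Rabs z / INR (S j))) with (q1 * q2 * Rabs z * (t / INR (S j)))
      by (field; lra).
    replace ((1 + Rabs a1 / b1) * (1 + Rabs a2 / b2) * Rabs z / INR (S j) * t)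
      with ((1 + Rabs a1 / b1) * (1 + Rabs a2 / b2) * Rabs z * (t / INR (S j)))
      by (field; lra).
    apply Rmult_le_compat_r; [exact Ht|].
    apply Rmult_le_compat_r; [apply Rabs_pos|].
    apply Rmult_le_compat; [apply Rabs_pos | apply Rabs_pos | exact Hq1 | exact Hq2].
Qed.

Lemma is_series_of_hyp2F2_ratio (u : nat -> R) a1 a2 b1 b2 z : 0 < b1 -> 0 < b2 ->
  (forall j, u (S j) = u j *
     ((a1 + INR j) * (a2 + INR j) * z / ((b1 + INR j) * (b2 + INR j) * INR (S j)))) ->
  is_series u (u O * hyp2F2 a1 a2 b1 b2 z).
Proof.
  intros Hb1 Hb2 Hratio.
  assert (Hu : forall j, u j = u O * hyp2F2_term a1 a2 b1 b2 z j).
  { induction j as [|j IH].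
    - unfold hyp2F2_term. simpl. field.
    - rewrite Hratio, hyp2F2_term_succ, IH by assumption. ring. }
  eapply is_series_ext; [intros j; symmetry; apply Hu|].
  exact (is_series_scal_l _ _ _ (is_series_hyp2F2 a1 a2 b1 b2 z Hb1 Hb2)).
Qed.

Lemma is_RInt_sum_n (f : nat -> R -> R) (I : nat -> R) a b K :
  (forall k, is_RInt (f k) a b (I k)) ->
  is_RInt (fun x => sum_n (fun k => f k x) K) a b (sum_n I K).
Proof.
  intros Hf. induction K as [|K IH].
  - rewrite sum_O. eapply is_RInt_ext; [|apply Hf]. intros x _. rewrite sum_O. reflexivity.
  - rewrite sum_Sn. eapply is_RInt_ext; [|exact (is_RInt_plus _ _ _ _ _ _ IH (Hf (S K)))].
    intros x _. rewrite sum_Sn. reflexivity.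
Qed.

Lemma is_lim_sum_n (f : nat -> R -> R) (l : nat -> R) (x : Rbar) K :
  (forall k, is_lim (f k) x (l k)) -> is_lim (fun y => sum_n (fun k => f k y) K) x (sum_n l K).
Proof.
  intros Hf. induction K as [|K IH].
  - rewrite sum_O. eapply is_lim_ext; [|apply Hf]. intros y. rewrite sum_O. reflexivity.
  - rewrite sum_Sn. eapply is_lim_ext; [|exact (is_lim_plus _ _ _ _ _ _ IH (Hf (S K)) eq_refl)].
    intros y. rewrite sum_Sn. reflexivity.
Qed.

Lemma is_RInt_gen_of_lims (f F : R -> R) (Fa Fb : (R -> Prop) -> Prop)
  {FFa : Filter Fa} {FFb : Filter Fb} (la lb : R) :
  filter_prod Fa Fb (fun ab => is_RInt f (fst ab) (snd ab) (F (snd ab) - F (fst ab))) ->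
  filterlim F Fa (locally la) -> filterlim F Fb (locally lb) ->
  is_RInt_gen f Fa Fb (lb - la).
Proof.
  intros Hint Ha Hb P [eps HP].
  assert (He : 0 < eps / 2) by (generalize (cond_pos eps); lra).
  assert (Hfst : filter_prod Fa Fb (fun ab => Rabs (F (fst ab) - la) < eps / 2)).
  { apply (filterlim_fst (F := Fa) (G := Fb) (fun x => Rabs (F x - la) < eps / 2)).
    apply (Ha (fun y => Rabs (y - la) < eps / 2)). exists (mkposreal _ He). intros y Hy. exact Hy. }
  assert (Hsnd : filter_prod Fa Fb (fun ab => Rabs (F (snd ab) - lb) < eps / 2)).
  { apply (filterlim_snd (F := Fa) (G := Fb) (fun x => Rabs (F x - lb) < eps / 2)).
    apply (Hb (fun y => Rabs (y - lb) < eps / 2)). exists (mkposreal _ He). intros y Hy. exact Hy. }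
  unfold filtermapi. generalize (filter_and _ _ Hint (filter_and _ _ Hfst Hsnd)).
  apply filter_imp. intros ab [HI [H1 H2]].
  exists (F (snd ab) - F (fst ab)). split; [exact HI|].
  apply HP. change (Rabs (F (snd ab) - F (fst ab) - (lb - la)) < eps).
  replace (F (snd ab) - F (fst ab) - (lb - la)) with ((F (snd ab) - lb) - (F (fst ab) - la))
    by ring.
  eapply Rle_lt_trans; [apply Rabs_triang|]. rewrite Rabs_Ropp. lra.
Qed.

Lemma is_RInt_inv_sqr (K u v : R) : 0 < u <= v -> is_RInt (fun x => K / x ^ 2) u v (K / u - K / v).
Proof.
  intros Huv.
  replace (K / u - K / v) with (minus (- K / v) (- K / u))
    by (unfold minus, plus, opp; simpl; field; lra).
  apply (is_RInt_derive (fun x => - K / x)).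
  - intros x Hx. rewrite Rmin_left, Rmax_right in Hx by lra.
    auto_derive; [lra | field; lra].
  - intros x Hx. rewrite Rmin_left, Rmax_right in Hx by lra.
    apply (ex_derive_continuous (V := R_NormedModule)). auto_derive.
    rewrite Rmult_1_r. apply Rmult_integral_contrapositive_currified; lra.
Qed.

Lemma ex_lim_RInt_of_inv_sqr_bound (f : R -> R) (a K : R) :
  (forall x, continuous f x) -> (forall x, 1 <= x -> Rabs (f x) <= K / x ^ 2) ->
  exists l : R, is_lim (fun y => RInt f a y) p_infty l.
Proof.
  intros Hcont Hdecay.
  assert (HK : 0 <= K).
  { generalize (Hdecay 1 (Rle_refl 1)) (Rabs_pos (f 1)). simpl. lra. }
  assert (Hex : forall u v, ex_RInt f u v).
  { intros u v. apply (ex_RInt_continuous (V := R_CompleteNormedModule)). auto. }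
  assert (Hcauchy : forall u v, 1 <= u <= v -> Rabs (RInt f a v - RInt f a u) <= K / u).
  { intros u v Huv.
    assert (HC := RInt_Chasles f a u v (Hex a u) (Hex u v)).
    change (RInt f a u + RInt f u v = RInt f a v) in HC.
    replace (RInt f a v - RInt f a u) with (RInt f u v) by lra.
    apply Rle_trans with (K / u - K / v).
    - apply (norm_RInt_le f (fun x => K / x ^ 2) u v); [lra | | | apply is_RInt_inv_sqr; lra].
      + intros x Hx. apply Hdecay. lra.
      + apply (RInt_correct (V := R_CompleteNormedModule)), Hex.
    - assert (0 <= K / v) by (apply Rdiv_le_0_compat; lra). lra. }
  destruct (proj1 (filterlim_locally_cauchy (F := Rbar_locally p_infty) (fun y => RInt f a y)))
    as [l Hl].
  - intros eps. exists (fun y => Rmax 1 (K / eps) < y). split; [exists (Rmax 1 (K / eps)); auto|].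
    assert (Hbound : forall u, Rmax 1 (K / eps) < u -> K / u < eps).
    { intros u Hu. generalize (Rmax_l 1 (K / eps)) (Rmax_r 1 (K / eps)). intros H1 H2.
      assert (HKu : K / eps < u) by lra.
      apply Rlt_div_l in HKu; [|apply cond_pos].
      apply Rlt_div_l; lra. }
    intros u v Hu Hv. generalize (Rmax_l 1 (K / eps)). intros H1.
    destruct (Rle_dec u v) as [Huv | Hvu].
    + apply (Rle_lt_trans _ _ _ (Hcauchy u v ltac:(lra))). apply Hbound, Hu.
    + apply ball_sym. apply (Rle_lt_trans _ _ _ (Hcauchy v u ltac:(lra))). apply Hbound, Hv.
  - exists l. exact Hl.
Qed.

Lemma is_RInt_sub_RInt0 (f : R -> R) a b :
  (forall u v, ex_RInt f u v) -> is_RInt f a b (RInt f 0 b - RInt f 0 a).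
Proof.
  intros Hex.
  assert (H := is_RInt_Chasles _ _ _ _ _ _
    (is_RInt_swap _ _ _ _ (RInt_correct (V := R_CompleteNormedModule) _ _ _ (Hex 0 a)))
    (RInt_correct (V := R_CompleteNormedModule) _ _ _ (Hex 0 b))).
  replace (RInt f 0 b - RInt f 0 a) with (plus (opp (RInt f 0 a)) (RInt f 0 b))
    by (unfold plus, opp; simpl; ring).
  exact H.
Qed.

Lemma is_lim_of_uniform_approx (G : R -> R) (F : nat -> R -> R) (s e : nat -> R) (L : R) :
  (forall N y, 0 <= y -> Rabs (G y - F N y) <= e N) -> is_lim_seq e 0 ->
  (forall N, is_lim (F N) p_infty (s N)) -> is_lim_seq s L -> is_lim G p_infty L.
Proof.
  intros Hunif He HF Hs. apply is_lim_spec. intros eps.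
  assert (Heps : 0 < eps / 3) by (generalize (cond_pos eps); lra).
  destruct (proj2 (is_lim_seq_spec e 0) He (mkposreal _ Heps)) as [N1 HN1].
  destruct (proj2 (is_lim_seq_spec s L) Hs (mkposreal _ Heps)) as [N2 HN2].
  set (N := max N1 N2).
  destruct (proj2 (is_lim_spec _ _ _) (HF N) (mkposreal _ Heps)) as [M HM].
  exists (Rmax M 0). intros y Hy.
  generalize (Rmax_l M 0) (Rmax_r M 0). intros HyM Hy0.
  specialize (Hunif N y ltac:(lra)).
  specialize (HN1 N (Nat.le_max_l N1 N2)). specialize (HN2 N (Nat.le_max_r N1 N2)).
  specialize (HM y ltac:(lra)). simpl in HN1, HN2, HM.
  rewrite Rminus_0_r in HN1. generalize (Rle_abs (e N)). intros.
  replace (G y - L) with ((G y - F N y) + (F N y - s N) + (s N - L)) by ring.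
  eapply Rle_lt_trans; [apply Rabs_triang|].
  generalize (Rabs_triang (G y - F N y) (F N y - s N)). lra.
Qed.

(** * The moments M_c(m) *)

Definition weight (c : R) (m : nat) (x : R) : R := x ^ m * exp (- (c * x ^ 6)).

Definition partial_moment (c : R) (m : nat) (y : R) : R := RInt (weight c m) 0 y.

(* Meaningful only for 0 < c; otherwise [Lim] may be infinite and [real] then returns 0. *)
Definition moment (c : R) (m : nat) : R := real (Lim (partial_moment c m) p_infty).

Lemma continuous_weight c m x : continuous (weight c m) x.
Proof. apply (ex_derive_continuous (V := R_NormedModule)). unfold weight. auto_derive. exact I. Qed.

Lemma ex_RInt_weight c m a b : ex_RInt (weight c m) a b.
Proof.
  apply (ex_RInt_continuous (V := R_CompleteNormedModule)). intros. apply continuous_weight.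
Qed.

Lemma is_RInt_partial_moment c m y : is_RInt (weight c m) 0 y (partial_moment c m y).
Proof. apply (RInt_correct (V := R_CompleteNormedModule)), ex_RInt_weight. Qed.

Lemma weight_nonneg c m x : 0 <= x -> 0 <= weight c m x.
Proof.
  intros Hx. unfold weight. apply Rmult_le_pos; [apply pow_le; lra | apply Rlt_le, exp_pos].
Qed.

Lemma weight_le_inv_sqr c m x : 0 < c -> 1 <= x ->
  weight c m x <= INR (fact (m + 1)) / c ^ (m + 1) / x ^ 2.
Proof.
  intros Hc Hx.
  assert (Hexp := pow_div_fact_le_exp (c * x ^ 6) (m + 1)
    ltac:(apply Rmult_le_pos; [lra | apply pow_le; lra])).
  assert (Hpow : x ^ m * x ^ 2 <= x ^ (6 * (m + 1))).
  { rewrite <- pow_add. apply Rle_pow; [lra | lia]. }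
  rewrite Rpow_mult_distr, <- pow_mult in Hexp.
  generalize (pow_lt c (m + 1) Hc) (pow_lt x 2 ltac:(lra)) (pow_le x m ltac:(lra))
    (INR_fact_pos (m + 1)) (exp_pos (c * x ^ 6)). intros Hcp Hx2 Hxm Hf HE.
  unfold weight. rewrite exp_Ropp.
  apply (Rmult_le_reg_r (c ^ (m + 1) * x ^ 2 * exp (c * x ^ 6))); [apply Rmult_lt_0_compat; nra|].
  replace (x ^ m * / exp (c * x ^ 6) * (c ^ (m + 1) * x ^ 2 * exp (c * x ^ 6)))
    with (c ^ (m + 1) * (x ^ m * x ^ 2)) by (field; lra).
  replace (INR (fact (m + 1)) / c ^ (m + 1) / x ^ 2 * (c ^ (m + 1) * x ^ 2 * exp (c * x ^ 6)))
    with (INR (fact (m + 1)) * exp (c * x ^ 6)) by (field; lra).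
  apply Rle_trans with (c ^ (m + 1) * x ^ (6 * (m + 1))); [apply Rmult_le_compat_l; lra|].
  apply (Rmult_le_reg_r (/ INR (fact (m + 1)))); [apply Rinv_0_lt_compat; lra|].
  replace (INR (fact (m + 1)) * exp (c * x ^ 6) * / INR (fact (m + 1))) with (exp (c * x ^ 6))
    by (field; lra).
  exact Hexp.
Qed.

Lemma is_lim_partial_moment c m : 0 < c ->
  is_lim (partial_moment c m) p_infty (moment c m).
Proof.
  intros Hc.
  destruct (ex_lim_RInt_of_inv_sqr_bound (weight c m) 0 (INR (fact (m + 1)) / c ^ (m + 1)))
    as [l Hl].
  - apply continuous_weight.
  - intros x Hx. rewrite Rabs_right by (apply Rle_ge, weight_nonneg; lra).
    apply weight_le_inv_sqr; assumption.
  - unfold moment. change (is_lim (partial_moment c m) p_infty l) in Hl.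
    rewrite (is_lim_unique _ _ _ Hl). exact Hl.
Qed.

Lemma partial_moment_le_moment c m y : 0 < c -> 0 <= y -> partial_moment c m y <= moment c m.
Proof.
  intros Hc Hy. change (Rbar_le (partial_moment c m y) (moment c m)).
  apply (is_lim_le_loc (fun _ => partial_moment c m y) (partial_moment c m) p_infty);
    [| apply is_lim_const | apply is_lim_partial_moment, Hc].
  exists y. intros z Hz.
  assert (HC := RInt_Chasles (weight c m) 0 y z
    (ex_RInt_weight _ _ _ _) (ex_RInt_weight _ _ _ _)).
  change (partial_moment c m y + RInt (weight c m) y z = partial_moment c m z) in HC.
  assert (0 <= RInt (weight c m) y z).
  { apply RInt_ge_0; [lra | apply ex_RInt_weight | intros; apply weight_nonneg; lra]. }
  lra.
Qed.

Lemma is_lim_weight c m : 0 < c -> is_lim (weight c m) p_infty 0.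
Proof.
  intros Hc. set (K := INR (fact (m + 1)) / c ^ (m + 1)).
  assert (HK : is_lim (fun y => K * / y) p_infty 0).
  { replace (Finite 0) with (Rbar_mult K (Rbar_inv p_infty)) by (simpl; f_equal; ring).
    apply is_lim_scal_l, is_lim_inv; [apply is_lim_id | discriminate]. }
  apply (is_lim_le_le_loc (fun _ => 0) (fun y => K * / y)); [| apply is_lim_const | exact HK].
  exists 1. intros x Hx. split; [apply weight_nonneg; lra|].
  apply Rle_trans with (K / x ^ 2); [apply weight_le_inv_sqr; lra|].
  assert (0 <= K) by (apply Rdiv_le_0_compat; [apply pos_INR | apply pow_lt, Hc]).
  unfold Rdiv. apply Rmult_le_compat_l; [assumption|].
  apply Rinv_le_contravar; [lra | simpl; nra].
Qed.

Lemma partial_moment_add6 c m y : 0 < c ->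
  partial_moment c (m + 6) y
  = INR (m + 1) / (6 * c) * partial_moment c m y - weight c (m + 1) y / (6 * c).
Proof.
  intros Hc.
  set (g := fun x => INR (m + 1) * weight c m x - 6 * c * weight c (m + 6) x).
  assert (Hderiv : is_RInt g 0 y (minus (weight c (m + 1) y) (weight c (m + 1) 0))).
  { apply (is_RInt_derive (weight c (m + 1))).
    - intros x _. unfold g, weight. auto_derive; [exact I|].
      replace (Init.Nat.pred (m + 1)) with m by lia. rewrite !pow_add. simpl. ring.
    - intros x _. apply (ex_derive_continuous (V := R_NormedModule)).
      unfold g, weight. auto_derive. repeat split. }
  assert (Hlin : is_RInt g 0 y
    (INR (m + 1) * partial_moment c m y - 6 * c * partial_moment c (m + 6) y)).
  { apply (is_RInt_minus (V := R_NormedModule));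
      apply (is_RInt_scal (V := R_NormedModule)); apply is_RInt_partial_moment. }
  assert (Hw0 : weight c (m + 1) 0 = 0) by (unfold weight; rewrite pow_i by lia; ring).
  apply (is_RInt_unique (V := R_CompleteNormedModule)) in Hderiv.
  apply (is_RInt_unique (V := R_CompleteNormedModule)) in Hlin. rewrite Hderiv in Hlin.
  unfold minus, plus, opp in Hlin; simpl in Hlin. rewrite Hw0 in Hlin.
  field_simplify_eq; lra.
Qed.

Lemma moment_add6 c m : 0 < c -> moment c (m + 6) = INR (m + 1) / (6 * c) * moment c m.
Proof.
  intros Hc.
  assert (Hlim :
    is_lim (partial_moment c (m + 6)) p_infty (INR (m + 1) / (6 * c) * moment c m)).
  { eapply is_lim_ext; [intros y; symmetry; apply partial_moment_add6, Hc|].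
    eapply is_lim_minus;
      [apply is_lim_scal_l, is_lim_partial_moment, Hc | apply is_lim_scal_r, is_lim_weight, Hc|].
    simpl. unfold is_Rbar_minus, is_Rbar_plus. simpl. do 2 f_equal. ring. }
  apply is_lim_unique in Hlim.
  rewrite (is_lim_unique _ _ _ (is_lim_partial_moment c (m + 6) Hc)) in Hlim.
  injection Hlim. auto.
Qed.

Lemma moment_add12 c m : 0 < c ->
  moment c (m + 12) = (INR m + 1) * (INR m + 7) / (36 * c ^ 2) * moment c m.
Proof.
  intros Hc. replace (m + 12)%nat with (m + 6 + 6)%nat by lia.
  rewrite !moment_add6 by assumption. rewrite !plus_INR. simpl. field. lra.
Qed.

(** * Gamma as a moment *)

Lemma continuous_partial_moment c m y : continuous (partial_moment c m) y.
Proof.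
  apply (ex_derive_continuous (V := R_NormedModule)). eexists.
  apply (is_derive_RInt (weight c m) (partial_moment c m) 0 y); [|apply continuous_weight].
  exists (mkposreal 1 Rlt_0_1). intros z _. apply is_RInt_partial_moment.
Qed.

Lemma Rpower_pow6_sixth x : 0 < x -> Rpower (x ^ 6) (/ 6) = x.
Proof.
  intros Hx. rewrite <- Rpower_pow, Rpower_mult by exact Hx.
  replace (INR 6 * / 6) with 1 by (simpl; field). apply Rpower_1, Hx.
Qed.

Lemma pow6_Rpower_sixth t : 0 < t -> Rpower t (/ 6) ^ 6 = t.
Proof.
  intros Ht. rewrite <- Rpower_pow by apply exp_pos. rewrite Rpower_mult.
  replace (/ 6 * INR 6) with 1 by (simpl; field). apply Rpower_1, Ht.
Qed.

Lemma filterlim_Rpower_sixth_0 : filterlim (fun t => Rpower t (/ 6)) (at_right 0) (locally 0).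
Proof.
  intros P [eps HP].
  assert (He6 : 0 < eps ^ 6) by (apply pow_lt, cond_pos).
  exists (mkposreal _ He6). intros t Ht Htpos. apply HP.
  change (Rabs (Rpower t (/ 6) - 0) < eps).
  rewrite Rminus_0_r, Rabs_right by (apply Rle_ge, Rlt_le, exp_pos).
  unfold ball in Ht; simpl in Ht; unfold AbsRing_ball, abs, minus, plus, opp in Ht; simpl in Ht.
  rewrite Ropp_0, Rplus_0_r, Rabs_right in Ht by lra.
  rewrite <- (Rpower_pow6_sixth eps) by apply cond_pos.
  apply Rlt_Rpower_l; lra.
Qed.

Lemma filterlim_Rpower_sixth_p_infty :
  filterlim (fun t => Rpower t (/ 6)) (Rbar_locally p_infty) (Rbar_locally p_infty).
Proof.
  intros P [M HP]. set (M' := Rmax M 1).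
  assert (HM' : 0 < M') by (unfold M'; generalize (Rmax_r M 1); lra).
  exists (M' ^ 6). intros t Ht. apply HP.
  apply Rle_lt_trans with M'; [apply Rmax_l|].
  assert (0 < M' ^ 6) by (apply pow_lt, HM').
  rewrite <- (Rpower_pow6_sixth M') by exact HM'. apply Rlt_Rpower_l; lra.
Qed.

Lemma Gamma_integrand_pow6 m x : 0 < x ->
  6 * x ^ 5 * (Rpower (x ^ 6) ((INR m + 1) / 6 - 1) * exp (- x ^ 6)) = 6 * weight 1 m x.
Proof.
  intros Hx. unfold weight.
  rewrite <- (Rpower_pow 6 x), Rpower_mult, <- (Rpower_pow m x), <- (Rpower_pow 5 x) by exact Hx.
  replace (INR 6 * ((INR m + 1) / 6 - 1)) with (INR m + - INR 5) by (simpl; field).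
  rewrite Rpower_plus, Rpower_Ropp, (Rpower_pow 6 x) by exact Hx.
  rewrite Rmult_1_l. generalize (exp_pos (INR 5 * ln x)). unfold Rpower. intros. field. lra.
Qed.

Lemma is_RInt_Gamma_integrand m u v : 0 < u -> 0 < v ->
  is_RInt (fun t => Rpower t ((INR m + 1) / 6 - 1) * exp (- t)) (u ^ 6) (v ^ 6)
    (6 * partial_moment 1 m v - 6 * partial_moment 1 m u).
Proof.
  intros Hu Hv. set (g := fun t => Rpower t ((INR m + 1) / 6 - 1) * exp (- t)).
  assert (Hpos : forall x, Rmin u v <= x -> 0 < x).
  { intros x Hx. generalize (Rmin_glb_lt u v 0 Hu Hv). lra. }
  assert (Hg : forall t, 0 < t -> continuous g t).
  { intros t Ht. apply (ex_derive_continuous (V := R_NormedModule)).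
    unfold g, Rpower. auto_derive. exact Ht. }
  assert (Hsubst :
    is_RInt (fun x => scal (6 * x ^ 5) (g (x ^ 6))) u v (RInt g (u ^ 6) (v ^ 6))).
  { apply (is_RInt_comp (V := R_CompleteNormedModule)).
    - intros x Hx. apply Hg, pow_lt, Hpos. lra.
    - intros x _. split; [auto_derive; [exact I | simpl; ring]|].
      apply (ex_derive_continuous (V := R_NormedModule)). auto_derive. exact I. }
  assert (Hweight : is_RInt (fun x => scal (6 * x ^ 5) (g (x ^ 6))) u v
                      (6 * partial_moment 1 m v - 6 * partial_moment 1 m u)).
  { apply (is_RInt_ext (fun x => 6 * weight 1 m x)).
    - intros x Hx. symmetry. apply Gamma_integrand_pow6, Hpos. lra.
    - replace (6 * partial_moment 1 m v - 6 * partial_moment 1 m u)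
        with (scal 6 (partial_moment 1 m v - partial_moment 1 m u))
        by (unfold scal; simpl; unfold mult; simpl; ring).
      apply (is_RInt_scal (V := R_NormedModule)), is_RInt_sub_RInt0, ex_RInt_weight. }
  rewrite <- (is_RInt_unique _ _ _ _ Hweight), (is_RInt_unique _ _ _ _ Hsubst).
  apply (RInt_correct (V := R_CompleteNormedModule)).
  apply (ex_RInt_continuous (V := R_CompleteNormedModule)). intros t Ht. apply Hg.
  generalize (pow_lt u 6 Hu) (pow_lt v 6 Hv) (Rmin_glb_lt (u ^ 6) (v ^ 6) 0). lra.
Qed.

Lemma Gamma_eq_moment m : Gamma ((INR m + 1) / 6) = 6 * moment 1 m.
Proof.
  apply is_RInt_gen_unique.
  replace (6 * moment 1 m) with (6 * moment 1 m - 6 * partial_moment 1 m 0)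
    by (unfold partial_moment; rewrite RInt_point; unfold zero; simpl; ring).
  apply (is_RInt_gen_of_lims _ (fun t => 6 * partial_moment 1 m (Rpower t (/ 6)))
    (at_right 0) (Rbar_locally p_infty)).
  - exists (fun a => 0 < a) (fun b => 0 < b).
    + exists (mkposreal 1 Rlt_0_1). intros a _ Ha. exact Ha.
    + exists 0. intros b Hb. exact Hb.
    + intros a b Ha Hb. simpl.
      rewrite <- (pow6_Rpower_sixth a Ha) at 1. rewrite <- (pow6_Rpower_sixth b Hb) at 1.
      apply is_RInt_Gamma_integrand; apply exp_pos.
  - apply (filterlim_comp _ _ _ (fun t => Rpower t (/ 6)) (fun x => 6 * partial_moment 1 m x)
      _ (locally 0)); [exact filterlim_Rpower_sixth_0|].
    apply (continuous_scal_r 6 (partial_moment 1 m) 0), continuous_partial_moment.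
  - apply (filterlim_comp _ _ _ (fun t => Rpower t (/ 6)) (fun x => 6 * partial_moment 1 m x)
      _ (Rbar_locally p_infty)); [exact filterlim_Rpower_sixth_p_infty|].
    apply (is_lim_scal_l (partial_moment 1 m) 6 p_infty (moment 1 m)).
    apply is_lim_partial_moment, Rlt_0_1.
Qed.

(** * Summing the expanded integral by residues mod 3 *)

Definition moment_coeff (c t : R) (n k : nat) : R :=
  t ^ k / INR (fact k) * moment c (2 * n + 4 * k).

Lemma moment_coeff_add3 c t n k : 0 < c ->
  moment_coeff c t n (k + 3) = moment_coeff c t n k *
    (t ^ 3 * (2 * INR n + 4 * INR k + 1) * (2 * INR n + 4 * INR k + 7)
     / (36 * c ^ 2 * ((INR k + 1) * (INR k + 2) * (INR k + 3)))).
Proof.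
  intros Hc. unfold moment_coeff.
  replace (2 * n + 4 * (k + 3))%nat with (2 * n + 4 * k + 12)%nat by lia.
  rewrite moment_add12 by exact Hc.
  replace (k + 3)%nat with (S (S (S k))) by lia.
  rewrite !fact_simpl, !mult_INR, !S_INR, !plus_INR, !mult_INR.
  generalize (INR_fact_pos k) (pos_INR k). simpl. intros. field. repeat split; nra.
Qed.

Lemma is_series_moment_coeff_residue c t n r a1 a2 b1 b2 : 0 < c -> 0 < b1 -> 0 < b2 ->
  12 * a1 = 2 * INR n + 4 * INR r + 1 -> 12 * a2 = 2 * INR n + 4 * INR r + 7 ->
  (forall x, (3 * x + INR r + 1) * (3 * x + INR r + 2) * (3 * x + INR r + 3)
             = 27 * (b1 + x) * (b2 + x) * (x + 1)) ->
  is_series (fun j => moment_coeff c t n (3 * j + r))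
    (moment_coeff c t n r * hyp2F2 a1 a2 b1 b2 (4 * t ^ 3 / (27 * c ^ 2))).
Proof.
  intros Hc Hb1 Hb2 Ha1 Ha2 Hb.
  apply (is_series_of_hyp2F2_ratio (fun j => moment_coeff c t n (3 * j + r)));
    [exact Hb1 | exact Hb2|].
  intros j. replace (3 * S j + r)%nat with (3 * j + r + 3)%nat by lia.
  rewrite moment_coeff_add3 by exact Hc. f_equal.
  specialize (Hb (INR j)). generalize (pos_INR j). intros Hj.
  rewrite S_INR, plus_INR, mult_INR. replace (INR 3) with 3 by (simpl; ring).
  replace ((3 * INR j + INR r + 1) * (3 * INR j + INR r + 2) * (3 * INR j + INR r + 3))
    with (27 * (b1 + INR j) * (b2 + INR j) * (INR j + 1)) by (rewrite <- Hb; simpl; ring).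
  replace (2 * INR n + 4 * (3 * INR j + INR r) + 1) with (12 * (a1 + INR j)) by lra.
  replace (2 * INR n + 4 * (3 * INR j + INR r) + 7) with (12 * (a2 + INR j)) by lra.
  field. repeat split; lra.
Qed.

Lemma sum_n_mod3 (h : nat -> R) N :
  sum_n h (3 * N + 2)
  = sum_n (fun j => h (3 * j)%nat + h (3 * j + 1)%nat + h (3 * j + 2)%nat) N.
Proof.
  induction N as [|N IH].
  - rewrite sum_O. simpl. rewrite !sum_Sn, sum_O. reflexivity.
  - replace (3 * S N + 2)%nat with (S (S (S (3 * N + 2)))) by lia.
    rewrite !sum_Sn, IH.
    replace (S (S (S (3 * N + 2)))) with (3 * S N + 2)%nat by lia.
    replace (S (S (3 * N + 2))) with (3 * S N + 1)%nat by lia.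
    replace (S (3 * N + 2)) with (3 * S N)%nat by lia.
    set (h0 := h (3 * S N)%nat). set (h1 := h (3 * S N + 1)%nat).
    set (h2 := h (3 * S N + 2)%nat).
    unfold plus; simpl. ring.
Qed.

Definition mu_half (tau : R) (n : nat) : R :=
  moment_coeff 1 tau n 0
    * hyp2F2 (/6 * INR n + /12) (/6 * INR n + 7/12) (/3) (2/3) (4 * tau ^ 3 / 27)
  + moment_coeff 1 tau n 1
    * hyp2F2 (/6 * INR n + 5/12) (/6 * INR n + 11/12) (2/3) (4/3) (4 * tau ^ 3 / 27)
  + moment_coeff 1 tau n 2
    * hyp2F2 (/6 * INR n + 3/4) (/6 * INR n + 5/4) (4/3) (5/3) (4 * tau ^ 3 / 27).

Lemma is_series_moment_coeff_mod3 tau n :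
  is_series (fun j => moment_coeff 1 tau n (3 * j) + moment_coeff 1 tau n (3 * j + 1)
                      + moment_coeff 1 tau n (3 * j + 2)) (mu_half tau n).
Proof.
  assert (Hz : 4 * tau ^ 3 / 27 = 4 * tau ^ 3 / (27 * 1 ^ 2)) by (simpl; field).
  assert (H0 : is_series (fun j => moment_coeff 1 tau n (3 * j + 0))
    (moment_coeff 1 tau n 0
     * hyp2F2 (/6 * INR n + /12) (/6 * INR n + 7/12) (/3) (2/3) (4 * tau ^ 3 / 27))).
  { rewrite Hz. apply is_series_moment_coeff_residue; simpl; intros; try field; lra. }
  assert (H1 : is_series (fun j => moment_coeff 1 tau n (3 * j + 1))
    (moment_coeff 1 tau n 1
     * hyp2F2 (/6 * INR n + 5/12) (/6 * INR n + 11/12) (2/3) (4/3) (4 * tau ^ 3 / 27))).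
  { rewrite Hz. apply is_series_moment_coeff_residue; simpl; intros; try field; lra. }
  assert (H2 : is_series (fun j => moment_coeff 1 tau n (3 * j + 2))
    (moment_coeff 1 tau n 2
     * hyp2F2 (/6 * INR n + 3/4) (/6 * INR n + 5/4) (4/3) (5/3) (4 * tau ^ 3 / 27))).
  { rewrite Hz. apply is_series_moment_coeff_residue; simpl; intros; try field; lra. }
  assert (H := is_series_plus _ _ _ _ (is_series_plus _ _ _ _ H0 H1) H2).
  eapply is_series_ext; [|exact H]. intros j. cbv beta. rewrite Nat.add_0_r. reflexivity.
Qed.

(** * The truncation error *)

(* The ratio of consecutive error terms, [moment_coeff_add3] at c = 1/2 and k = 3x+3. *)
Lemma moment_coeff_half_ratio_le t a x : 0 <= t -> 0 <= a -> 0 <= x ->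
  t ^ 3 * (2 * a + 4 * (3 * x + 3) + 1) * (2 * a + 4 * (3 * x + 3) + 7)
    / (36 * (/ 2) ^ 2 * ((3 * x + 3 + 1) * (3 * x + 3 + 2) * (3 * x + 3 + 3)))
  <= t ^ 3 * (2 * a + 13) * (2 * a + 19) / 243 / (x + 1).
Proof.
  intros Ht Ha Hx.
  assert (Ht3 : 0 <= t ^ 3) by (apply pow_le, Ht).
  assert (H1 : 0 <= 2 * a + 4 * (3 * x + 3) + 1 <= (2 * a + 13) * (x + 1)) by nra.
  assert (H2 : 0 <= 2 * a + 4 * (3 * x + 3) + 7 <= (2 * a + 19) * (x + 1)) by nra.
  assert (H3 : 0 < 27 * (x + 1) ^ 3 <= (3 * x + 3 + 1) * (3 * x + 3 + 2) * (3 * x + 3 + 3))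
    by (split; [apply Rmult_lt_0_compat; [lra | apply pow_lt; lra] | simpl; nra]).
  apply Rle_trans with
    (t ^ 3 * ((2 * a + 13) * (x + 1)) * ((2 * a + 19) * (x + 1)) / (9 * (27 * (x + 1) ^ 3))).
  - unfold Rdiv. apply Rmult_le_compat.
    + apply Rmult_le_pos; [apply Rmult_le_pos|]; lra.
    + apply Rlt_le, Rinv_0_lt_compat. nra.
    + apply Rmult_le_compat; [apply Rmult_le_pos | | apply Rmult_le_compat_l |]; lra.
    + apply Rinv_le_contravar; [nra|]. lra.
  - right. field. lra.
Qed.

Lemma is_lim_seq_moment_coeff_half t n : 0 <= t ->
  is_lim_seq (fun N => moment_coeff (/ 2) t n (3 * N + 3)) 0.
Proof.
  intros Ht. apply ex_series_lim_0.
  assert (Hn := pos_INR n).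
  apply (ex_series_of_ratio_le _ (t ^ 3 * (2 * INR n + 13) * (2 * INR n + 19) / 243)).
  { apply Rdiv_le_0_compat; [apply Rmult_le_pos; [apply Rmult_le_pos; [apply pow_le|]|]|]; lra. }
  intros N. assert (HN := pos_INR N).
  replace (3 * S N + 3)%nat with (3 * N + 3 + 3)%nat by lia.
  rewrite moment_coeff_add3 by lra.
  rewrite plus_INR, mult_INR. replace (INR 3) with 3 by (simpl; ring).
  rewrite Rabs_mult, Rmult_comm, S_INR. apply Rmult_le_compat_r; [apply Rabs_pos|].
  rewrite Rabs_right; [apply moment_coeff_half_ratio_le; assumption|].
  apply Rle_ge, Rdiv_le_0_compat; [|nra].
  apply Rmult_le_pos; [apply Rmult_le_pos; [apply pow_le|]|]; nra.
Qed.

Lemma mu_integrand_sub_trunc_le tau n K x :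
  Rabs (mu_integrand tau n x
        - sum_n (fun k => tau ^ k / INR (fact k) * weight 1 (2 * n + 4 * k) x) K)
  <= exp (4 * Rabs tau ^ 3) * (Rabs tau ^ S K / INR (fact (S K)))
     * weight (/ 2) (2 * n + 4 * S K) x.
Proof.
  set (t := Rabs tau). set (A := x ^ (2 * n) * exp (- x ^ 6)).
  assert (HA : 0 <= A).
  { unfold A. rewrite pow_mult. apply Rmult_le_pos; [apply pow_le; nra | apply Rlt_le, exp_pos]. }
  assert (Htrunc : sum_n (fun k => tau ^ k / INR (fact k) * weight 1 (2 * n + 4 * k) x) K
                   = A * sum_n (fun k => (tau * x ^ 4) ^ k / INR (fact k)) K).
  { assert (Hterm : forall k, tau ^ k / INR (fact k) * weight 1 (2 * n + 4 * k) x
                              = A * ((tau * x ^ 4) ^ k / INR (fact k))).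
    { intros k. unfold A, weight. rewrite Rpow_mult_distr, pow_add, <- pow_mult, Rmult_1_l.
      field. apply INR_fact_neq_0. }
    rewrite <- (sum_n_scal_l (V := R_ModuleSpace)). apply sum_n_ext. exact Hterm. }
  assert (Hmu : mu_integrand tau n x = A * exp (tau * x ^ 4)).
  { unfold mu_integrand, A. rewrite Rmult_assoc, <- exp_plus. reflexivity. }
  assert (Hx4 : 0 <= x ^ 4) by (replace (x ^ 4) with ((x ^ 2) ^ 2) by ring; apply pow2_ge_0).
  (* lets e^(x^6/2) absorb e^(|tau| x^4) in the Taylor remainder *)
  assert (Hyoung : t * x ^ 4 <= x ^ 6 / 2 + 4 * t ^ 3).
  { assert (Ht : 0 <= t) by apply Rabs_pos.
    assert (Hx2 : 0 <= x ^ 2) by apply pow2_ge_0.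
    replace (x ^ 4) with ((x ^ 2) ^ 2) by ring. replace (x ^ 6) with ((x ^ 2) ^ 3) by ring.
    set (u := x ^ 2) in *.
    assert (0 <= t ^ 3) by (apply pow_le, Ht). assert (0 <= u ^ 3) by (apply pow_le, Hx2).
    destruct (Rle_lt_dec (2 * t) u) as [Hu | Hu].
    - assert (t * u ^ 2 <= u ^ 3 / 2) by (simpl; nra). lra.
    - assert (u * u <= 4 * (t * t)) by nra.
      assert (t * u ^ 2 <= 4 * t ^ 3) by (simpl; nra). lra. }
  rewrite Htrunc, Hmu, <- Rmult_minus_distr_l, Rabs_mult, (Rabs_right A) by lra.
  eapply Rle_trans; [apply Rmult_le_compat_l; [exact HA | apply exp_taylor_remainder]|].
  rewrite Rabs_mult, (Rabs_right (x ^ 4)) by lra. fold t.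
  apply Rle_trans with (A * ((t * x ^ 4) ^ S K / INR (fact (S K)) * exp (x ^ 6 / 2 + 4 * t ^ 3))).
  - apply Rmult_le_compat_l; [exact HA|]. apply Rmult_le_compat_l.
    + apply Rdiv_le_0_compat; [|apply INR_fact_pos].
      apply pow_le, Rmult_le_pos; [apply Rabs_pos | lra].
    + destruct Hyoung as [Hlt | Heq]; [left; apply exp_increasing, Hlt | rewrite Heq; lra].
  - right. unfold A, weight. rewrite exp_plus, Rpow_mult_distr, pow_add, <- pow_mult.
    replace (exp (- x ^ 6)) with (exp (- (/ 2 * x ^ 6)) * / exp (x ^ 6 / 2))
      by (rewrite <- exp_Ropp, <- exp_plus; f_equal; field).
    generalize (exp_pos (x ^ 6 / 2)) (INR_fact_pos (S K)). intros. field. lra.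
Qed.

Definition mu_partial (tau : R) (n : nat) (y : R) : R := RInt (mu_integrand tau n) 0 y.

Lemma continuous_mu_integrand tau n x : continuous (mu_integrand tau n) x.
Proof.
  apply (ex_derive_continuous (V := R_NormedModule)). unfold mu_integrand. auto_derive. exact I.
Qed.

Lemma ex_RInt_mu_integrand tau n a b : ex_RInt (mu_integrand tau n) a b.
Proof.
  apply (ex_RInt_continuous (V := R_CompleteNormedModule)). intros. apply continuous_mu_integrand.
Qed.

Lemma mu_partial_sub_trunc_le tau n K y : 0 <= y ->
  Rabs (mu_partial tau n y
        - sum_n (fun k => tau ^ k / INR (fact k) * partial_moment 1 (2 * n + 4 * k) y) K)
  <= exp (4 * Rabs tau ^ 3) * moment_coeff (/ 2) (Rabs tau) n (S K).
Proof.
  intros Hy.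
  set (C := exp (4 * Rabs tau ^ 3) * (Rabs tau ^ S K / INR (fact (S K)))).
  assert (HC : 0 <= C).
  { apply Rmult_le_pos; [apply Rlt_le, exp_pos|].
    apply Rdiv_le_0_compat; [apply pow_le, Rabs_pos | apply INR_fact_pos]. }
  assert (Hdiff := is_RInt_minus (V := R_NormedModule) _ _ 0 y _ _
    (RInt_correct (V := R_CompleteNormedModule) _ _ _ (ex_RInt_mu_integrand tau n 0 y))
    (is_RInt_sum_n (fun k x => tau ^ k / INR (fact k) * weight 1 (2 * n + 4 * k) x)
       (fun k => tau ^ k / INR (fact k) * partial_moment 1 (2 * n + 4 * k) y) 0 y K
       (fun k => is_RInt_scal (V := R_NormedModule) _ _ _ _ _ (is_RInt_partial_moment _ _ _)))).
  assert (Hbound := is_RInt_scal (V := R_NormedModule) _ 0 y C _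
    (is_RInt_partial_moment (/ 2) (2 * n + 4 * S K) y)).
  assert (Hpt : forall x, 0 <= x <= y ->
    norm (minus (mu_integrand tau n x)
      (sum_n (fun k => tau ^ k / INR (fact k) * weight 1 (2 * n + 4 * k) x) K))
    <= scal C (weight (/ 2) (2 * n + 4 * S K) x))
    by (intros x _; apply mu_integrand_sub_trunc_le).
  eapply Rle_trans; [exact (norm_RInt_le _ _ 0 y _ _ Hy Hpt Hdiff Hbound)|].
  unfold moment_coeff. change (scal C (partial_moment (/ 2) (2 * n + 4 * S K) y))
    with (C * partial_moment (/ 2) (2 * n + 4 * S K) y).
  rewrite <- Rmult_assoc. apply Rmult_le_compat_l; [exact HC|].
  apply partial_moment_le_moment; lra.
Qed.

(** * The integral over the real line *)

Lemma mu_partial_opp tau n y : mu_partial tau n (- y) = - mu_partial tau n y.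
Proof.
  assert (Heven : forall x, mu_integrand tau n (- x) = mu_integrand tau n x).
  { intros x. unfold mu_integrand. rewrite !pow_mult.
    replace ((- x) ^ 2) with (x ^ 2) by ring. replace ((- x) ^ 6) with (x ^ 6) by ring.
    replace ((- x) ^ 4) with (x ^ 4) by ring. reflexivity. }
  assert (H : is_RInt (mu_integrand tau n) (- 0) (- y) (mu_partial tau n (- y))).
  { rewrite Ropp_0. apply (RInt_correct (V := R_CompleteNormedModule)), ex_RInt_mu_integrand. }
  apply is_RInt_comp_opp, (is_RInt_unique (V := R_CompleteNormedModule)) in H.
  rewrite <- H. unfold mu_partial.
  rewrite <- (RInt_opp (V := R_CompleteNormedModule)) by apply ex_RInt_mu_integrand.
  apply RInt_ext. intros x _. rewrite Heven. reflexivity.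
Qed.

(* Truncating after K = 3N+2 keeps whole residue classes mod 3, and [moment_add12]
   controls the error term only in steps of 3 in K. *)
Lemma is_lim_mu_partial tau n : is_lim (mu_partial tau n) p_infty (mu_half tau n).
Proof.
  apply (is_lim_of_uniform_approx _
    (fun N y => sum_n (fun k => tau ^ k / INR (fact k) * partial_moment 1 (2 * n + 4 * k) y)
                  (3 * N + 2))
    (fun N => sum_n (moment_coeff 1 tau n) (3 * N + 2))
    (fun N => exp (4 * Rabs tau ^ 3) * moment_coeff (/ 2) (Rabs tau) n (3 * N + 3))).
  - intros N y Hy. replace (3 * N + 3)%nat with (S (3 * N + 2)) by lia.
    apply mu_partial_sub_trunc_le, Hy.
  - replace (Finite 0) with (Rbar_mult (exp (4 * Rabs tau ^ 3)) 0) by (simpl; f_equal; ring).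
    apply is_lim_seq_scal_l, is_lim_seq_moment_coeff_half, Rabs_pos.
  - intros N. apply is_lim_sum_n. intros k.
    exact (is_lim_scal_l _ (tau ^ k / INR (fact k)) _ _ (is_lim_partial_moment 1 _ Rlt_0_1)).
  - eapply is_lim_seq_ext; [intros N; symmetry; apply sum_n_mod3|].
    apply is_series_moment_coeff_mod3.
Qed.

Lemma is_lim_mu_partial_m_infty tau n : is_lim (mu_partial tau n) m_infty (- mu_half tau n).
Proof.
  apply (is_lim_ext (fun y => - mu_partial tau n (- y))).
  { intros y. rewrite <- mu_partial_opp, Ropp_involutive. reflexivity. }
  apply (is_lim_opp (fun y => mu_partial tau n (- y)) m_infty (mu_half tau n)).
  apply (is_lim_comp (mu_partial tau n) Ropp m_infty (mu_half tau n) p_infty).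
  - apply is_lim_mu_partial.
  - exact (is_lim_opp _ _ _ (is_lim_id m_infty)).
  - exists 0. intros y _. discriminate.
Qed.

Theorem lemma6p10 (tau : R) (n : nat) :
  is_RInt_gen (mu_integrand tau n) (Rbar_locally m_infty) (Rbar_locally p_infty)
    (/3 * Gamma (/3 * INR n + /6)
        * hyp2F2 (/6 * INR n + /12) (/6 * INR n + 7/12) (/3) (2/3) (4 * tau ^ 3 / 27)
     + /3 * tau * Gamma (/3 * INR n + 5/6)
        * hyp2F2 (/6 * INR n + 5/12) (/6 * INR n + 11/12) (2/3) (4/3) (4 * tau ^ 3 / 27)
     + /6 * tau ^ 2 * Gamma (/3 * INR n + 3/2)
        * hyp2F2 (/6 * INR n + 3/4) (/6 * INR n + 5/4) (4/3) (5/3) (4 * tau ^ 3 / 27)).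
Proof.
  replace (/3 * INR n + /6) with ((INR (2 * n + 4 * 0) + 1) / 6)
    by (rewrite plus_INR, !mult_INR; simpl; field).
  replace (/3 * INR n + 5/6) with ((INR (2 * n + 4 * 1) + 1) / 6)
    by (rewrite plus_INR, !mult_INR; simpl; field).
  replace (/3 * INR n + 3/2) with ((INR (2 * n + 4 * 2) + 1) / 6)
    by (rewrite plus_INR, !mult_INR; simpl; field).
  rewrite !Gamma_eq_moment.
  match goal with |- is_RInt_gen _ _ _ ?v => replace v with (mu_half tau n - - mu_half tau n) end.
  2:{ unfold mu_half, moment_coeff.
      set (J0 := moment 1 (2 * n + 4 * 0)). set (J1 := moment 1 (2 * n + 4 * 1)).
      set (J2 := moment 1 (2 * n + 4 * 2)). simpl. field. }
  apply (is_RInt_gen_of_lims _ (mu_partial tau n) (Rbar_locally m_infty) (Rbar_locally p_infty)).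
  - exists (fun _ => True) (fun _ => True); [exists 0; auto | exists 0; auto |].
    intros a b _ _. apply is_RInt_sub_RInt0, ex_RInt_mu_integrand.
  - apply is_lim_mu_partial_m_infty.
  - apply is_lim_mu_partial.
Qed.
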